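(* Let $F$ be an algebraically closed field, $l>1$ an integer coprime to the characteristic of $F$, $\xi\in F$ a primitive $l$-th root of $1$, $m\ge1$, and $$Clg(l,m)=\langle x_1,\ldots,x_m \mid x_i^l=1;\ x_i^{-1}x_jx_i=\xi x_j \ (i<j);\ x_i^{-1}x_jx_i=\xi^{-1}x_j \ (i>j)\rangle.$$ Let $V$ be a subspace of $Clg(l,m)$ that is invariant under every automorphism of $Clg(l,m)$. Then $V$ is spanned by the ordered monomials $x_1^{k_1}\cdots x_m^{k_m}$ ($0\le k_i\le l-1$) that lie in $V$.
   Context: The ordered monomials $x_1^{k_1}x_2^{k_2}\cdots x_m^{k_m}$ with $0\le k_i\le l-1$ are the standard monomials of $Clg(l,m)$ (they form a basis of it). *)

From HB Require Import structures.
From mathcomp Require Import all_boot all_order all_algebra.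
Set Implicit Arguments. Unset Strict Implicit. Unset Printing Implicit Defensive.
Import GRing.Theory.
Local Open Scope ring_scope.

(* Concrete model of the generalized Clifford algebra Clg(l,m) over F, with
   respect to the (standard) basis of ordered monomials x^a = x_1^a_1...x_m^a_m,
   a : 'I_m -> 'Z_l (exponents mod l).  In Clg(l,m) the defining relations give
   x_i x_j = xi x_j x_i for j < i, hence
     x^a * x^b = xi ^ (sum_{j < i} a_i b_j) * x^(a+b).                       *)

Section Clg.
Variables (F : fieldType) (l m : nat) (xi : F).

Definition clg_expo := {ffun 'I_m -> 'Z_l}.

Definition clg := {ffun clg_expo -> F^o}.

Definition clg_beta (a b : clg_expo) : nat :=
  (\sum_(i < m) \sum_(j < m | (j < i)%N) (a i : nat) * (b j : nat))%N.

Definition clg_basis (a : clg_expo) : clg := [ffun c => (c == a)%:R].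

Definition clg_mul (u v : clg) : clg :=
  \sum_(a : clg_expo) \sum_(b : clg_expo)
     (u a * v b * xi ^+ clg_beta a b) *: clg_basis [ffun i => a i + b i].

Definition clg_one : clg := clg_basis [ffun=> 0].

Definition clg_gen (i : 'I_m) : clg := clg_basis [ffun j => (j == i)%:R].

Definition clg_exp (u : clg) (n : nat) : clg := iter n (clg_mul u) clg_one.

Definition clg_mono (k : clg_expo) : clg :=
  \big[clg_mul/clg_one]_(i < m) clg_exp (clg_gen i) (k i).

Definition clg_aut (f : 'End(clg)) : Prop :=
  [/\ bijective f, f clg_one = clg_one &
      forall u v, f (clg_mul u v) = clg_mul (f u) (f v)].

End Clg.

(** The ordered monomials [x^a] form a basis of [Clg(l,m)], and every
    [t : (Z/lZ)^m] yields a diagonal automorphism [x^a |-> chi_t(a) x^a] with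
    [chi_t(a) = prod_i xi^(t_i a_i)].  By orthogonality of the characters
    [chi_t] of [(Z/lZ)^m], averaging these automorphisms against
    [chi_t(a)^-1] sends [v] to [l^m v_a x^a]; since [xi] is a primitive
    [l]-th root of unity, [l] is invertible in [F].  So an invariant subspace
    contains every monomial occurring in one of its elements, and is
    therefore spanned by the monomials it contains. *)

From HB Require Import structures.
From mathcomp Require Import all_boot all_order all_algebra.
From mathcomp Require Import ring.
Import GRing.Theory.
Local Open Scope ring_scope.
Set Implicit Arguments. Unset Strict Implicit.

Section MonomialBasis.
Variables (F : fieldType) (l m : nat) (xi : F).
Local Notation clg := (clg F l m).
Local Notation expo := (clg_expo l m).

Lemma clg_basisE (a c : expo) : clg_basis F a c = (c == a)%:R.
Proof. by rewrite ffunE. Qed.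

Lemma clg_expansion (v : clg) : v = \sum_(a : expo) v a *: clg_basis F a.
Proof.
apply/ffunP => b; rewrite sum_ffunE (bigD1 b) //= big1 => [|a nab].
  by rewrite ffunE clg_basisE eqxx addr0 [_ *: _]mulr1.
by rewrite ffunE clg_basisE eq_sym (negbTE nab) [_ *: _]mulr0.
Qed.

Lemma clg_mul_basis (a b : expo) :
  clg_mul xi (clg_basis F a) (clg_basis F b) =
  xi ^+ clg_beta a b *: clg_basis F [ffun i => a i + b i].
Proof.
rewrite /clg_mul (bigD1 a) //= [X in _ + X]big1 => [|a' na'].
  rewrite addr0 (bigD1 b) //= [X in _ + X]big1 => [|b' nb'].
    by rewrite addr0 !clg_basisE !eqxx !mul1r.
  by rewrite !clg_basisE (negbTE nb') mulr0 mul0r scale0r.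
by rewrite big1 // => b' _; rewrite !clg_basisE (negbTE na') !mul0r scale0r.
Qed.

Lemma clg_beta_eq0 (a b : expo) :
  (forall i j : 'I_m, (j < i)%N -> a i = 0 \/ b j = 0) -> clg_beta a b = 0%N.
Proof.
move=> ab0; rewrite /clg_beta big1 // => i _; rewrite big1 // => j ji.
by case: (ab0 i j ji) => ->; rewrite ?muln0.
Qed.

Lemma clg_exp_gen (i : 'I_m) (k : nat) :
  clg_exp xi (clg_gen F l i) k = clg_basis F [ffun j => if j == i then k%:R else 0].
Proof.
elim: k => [|k IHk].
  by congr clg_basis; apply/ffunP => j; rewrite !ffunE; case: ifP.
rewrite /clg_exp iterS -/(clg_exp xi _ k) IHk clg_mul_basis clg_beta_eq0.
  rewrite scale1r; congr clg_basis; apply/ffunP => j; rewrite !ffunE.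
  by case: eqP; rewrite ?addr0 // -mulrS.
move=> i' j ji; rewrite !ffunE; case: (eqVneq i' i) => [ei|]; last by left.
by right; case: eqP => // ej; move: ji; rewrite ei ej ltnn.
Qed.

Lemma clg_prod_gen_sorted (k : expo) (s : seq 'I_m) :
  sorted (fun i j : 'I_m => (i < j)%N) s ->
  \big[clg_mul xi/clg_one F l m]_(i <- s) clg_exp xi (clg_gen F l i) (k i) =
  clg_basis F [ffun j => if j \in s then k j else 0].
Proof.
elim: s => [_|i s IHs /[dup] /path_sorted s_sorted].
  by rewrite big_nil; congr clg_basis; apply/ffunP => j; rewrite !ffunE.
have ord_ltn_trans : transitive (fun i j : 'I_m => (i < j)%N).
  by move=> y x z; apply: ltn_trans.
move=> /(order_path_min ord_ltn_trans)/allP s_gt_i.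
have i_notin_s : i \notin s by apply/negP => /s_gt_i; rewrite /= ltnn.
rewrite big_cons IHs // clg_exp_gen natr_Zp clg_mul_basis clg_beta_eq0.
  rewrite scale1r; congr clg_basis; apply/ffunP => j; rewrite !ffunE inE.
  by case: eqP => [->|_]; rewrite ?(negbTE i_notin_s) ?addr0 ?add0r.
move=> i' j ji; rewrite !ffunE; case: (eqVneq i' i) => [ei|]; last by left.
by right; case: ifP => // /s_gt_i; rewrite -ei /= ltnNge ltnW.
Qed.

Lemma clg_mono_basis (k : expo) : clg_mono xi k = clg_basis F k.
Proof.
rewrite /clg_mono [index_enum _]unlock -enumT clg_prod_gen_sorted.
  by congr clg_basis; apply/ffunP => j; rewrite !ffunE mem_enum.
by have := iota_ltn_sorted 0 m; rewrite -val_enum_ord sorted_map.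
Qed.

End MonomialBasis.

Lemma sum_expr_unity_root (R : idomainType) (z : R) (n : nat) :
  z ^+ n = 1 -> z != 1 -> \sum_(i < n) z ^+ i = 0.
Proof.
move=> zn1 z_neq1; apply/eqP; have := subrX1 z n.
by rewrite zn1 subrr => /esym/eqP; rewrite mulf_eq0 subr_eq0 (negbTE z_neq1).
Qed.

Section Characters.
Variables (F : fieldType) (n m : nat) (xi : F).
Hypothesis xi_prim : (n.+2).-primitive_root xi.
Local Notation l := n.+2.
Local Notation clg := (clg F l m).
Local Notation expo := (clg_expo l m).

Lemma xi_neq0 : xi != 0.
Proof. by rewrite (prim_root_eq0 xi_prim). Qed.

Definition clg_char (t a : expo) : F := \prod_(i < m) xi ^+ (t i * a i)%N.

Lemma clg_char_neq0 t a : clg_char t a != 0.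
Proof. by apply/prodf_neq0 => i _; rewrite expf_neq0 ?xi_neq0. Qed.

Lemma clg_charD t (a b : expo) :
  clg_char t [ffun i => a i + b i] = clg_char t a * clg_char t b.
Proof.
rewrite /clg_char -big_split; apply: eq_bigr => i _ /=; rewrite ffunE.
(* exponents live in 'Z_l, so their sum is reduced mod l, which xi ^+ _ ignores *)
rewrite -(prim_expr_mod xi_prim) modnMmr (prim_expr_mod xi_prim).
by rewrite mulnDr exprD.
Qed.

Lemma clg_char0 t : clg_char t [ffun=> 0] = 1.
Proof. by rewrite /clg_char big1 // => i _; rewrite ffunE muln0 expr0. Qed.

Definition clg_diag (s : expo -> F) (u : clg) : clg := [ffun a => s a * u a].

Lemma clg_diag_is_linear s : linear (clg_diag s).
Proof. by move=> c u v; apply/ffunP => a; rewrite !ffunE mulrDr mulrCA. Qed.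

HB.instance Definition _ s :=
  GRing.isLinear.Build F clg clg *:%R (clg_diag s) (clg_diag_is_linear s).

Lemma clg_diag_char_aut t : clg_aut xi (linfun (clg_diag (clg_char t))).
Proof.
split.
- exists (linfun (clg_diag (fun a => (clg_char t a)^-1))) => u;
    rewrite !lfunE /=; apply/ffunP => a;
    by rewrite !ffunE mulrA ?mulVf ?mulfV ?mul1r ?clg_char_neq0.
- rewrite lfunE /=; apply/ffunP => a; rewrite !ffunE.
  by case: eqP => [->|_]; rewrite ?clg_char0 ?mul1r ?mulr0.
- move=> u v; rewrite !lfunE /=; apply/ffunP => c.
  rewrite /clg_mul ffunE !sum_ffunE mulr_sumr; apply: eq_bigr => a _.
  rewrite !sum_ffunE mulr_sumr; apply: eq_bigr => b _.
  rewrite !ffunE; case: eqP => [->|_]; last by rewrite !mulr0n !scaler0 !mulr0.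
  by rewrite clg_charD /GRing.scale /=; ring.
Qed.

Lemma sum_prim_root_Zp (x y : 'Z_l) :
  \sum_(s : 'Z_l) (xi ^+ (s * x)%N)^-1 * xi ^+ (s * y)%N = if x == y then l%:R else 0.
Proof.
have zE (s : 'Z_l) :
    (xi ^+ (s * x)%N)^-1 * xi ^+ (s * y)%N = ((xi ^+ x)^-1 * xi ^+ y) ^+ s.
  by rewrite exprMn exprVn -!exprM ![(_ * s)%N]mulnC.
rewrite (eq_bigr _ (fun s _ => zE s)).
case: eqP => [<-|/eqP x_neq_y].
  rewrite mulVf ?expf_neq0 ?xi_neq0 //.
  by rewrite (eq_bigr (fun=> 1)) => [|s _]; rewrite ?expr1n // sumr_const card_ord.
apply: sum_expr_unity_root.
  by rewrite exprMn exprVn -!exprM ![(_ * l)%N]mulnC !exprM (prim_expr_order xi_prim)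
    !expr1n invr1 mulr1.
apply: contra x_neq_y => /eqP z1.
have := congr1 (fun w => xi ^+ x * w) z1.
rewrite mulrA mulfV ?expf_neq0 ?xi_neq0 // mul1r mulr1 => /eqP.
by rewrite (eq_prim_root_expr xi_prim) !modn_small ?ltn_ord // => /eqP/val_inj->.
Qed.

Lemma clg_char_orthogonality (a b : expo) :
  \sum_(t : expo) (clg_char t a)^-1 * clg_char t b = if a == b then l%:R ^+ m else 0.
Proof.
under eq_bigr => t _ do rewrite /clg_char -prodfV -big_split /=.
rewrite -(bigA_distr_bigA (fun (i : 'I_m) (s : 'Z_l) =>
  (xi ^+ (s * a i)%N)^-1 * xi ^+ (s * b i)%N)).
under eq_bigr => i _ do rewrite sum_prim_root_Zp.
case: (eqVneq a b) => [<-|a_neq_b].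
  by rewrite (eq_bigr (fun=> l%:R)) ?prodr_const ?card_ord // => i _; rewrite eqxx.
have [i a_neq_b_at_i] : exists i, a i != b i.
  apply/existsP; apply: contraR a_neq_b => /existsPn eq_ab.
  by apply/eqP/ffunP => i; exact/eqP/negbNE.
by rewrite (bigD1 i) //= (negbTE a_neq_b_at_i) mul0r.
Qed.

Lemma clg_char_average (v : clg) (a : expo) :
  \sum_(t : expo) (clg_char t a)^-1 *: clg_diag (clg_char t) v =
  (v a * l%:R ^+ m) *: clg_basis F a.
Proof.
apply/ffunP => b; rewrite sum_ffunE.
under eq_bigr => t _ do rewrite !ffunE /GRing.scale /= mulrA.
rewrite -mulr_suml clg_char_orthogonality !ffunE /GRing.scale /=.
by case: (eqVneq b a) => [->|_]; rewrite ?mulr1 ?mulr0 ?mul0r // mulrC.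
Qed.

Lemma clg_basis_mem_invariant (V : {vspace clg}) (v : clg) (a : expo) :
  (forall f : 'End(clg), clg_aut xi f -> (f @: V <= V)%VS) ->
  v \in V -> v a != 0 -> clg_basis F a \in V.
Proof.
move=> V_inv vV va_neq0.
have avg_in_V : \sum_(t : expo) (clg_char t a)^-1 *: clg_diag (clg_char t) v \in V.
  apply: memv_suml => t _; apply: memvZ.
  have := memv_img (linfun (clg_diag (clg_char t))) vV; rewrite lfunE.
  by apply: subvP; apply: V_inv; apply: clg_diag_char_aut.
have coef_neq0 : v a * l%:R ^+ m != 0.
  by rewrite mulf_neq0 // expf_neq0 // (prim_root_natf_neq0 xi_prim).
rewrite clg_char_average in avg_in_V.
by rewrite -[clg_basis F a](scalerK coef_neq0) memvZ.
Qed.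

End Characters.

Theorem lemma2 (F : closedFieldType) (l m : nat) (xi : F)
  (hl : (1 < l)%N) (hchar : [pchar F]^'.-nat l)
  (hxi : l.-primitive_root xi) (hm : (0 < m)%N)
  (V : {vspace clg F l m})
  (hV : forall f : 'End(clg F l m), clg_aut xi f -> (f @: V <= V)%VS) :
  V = <<[seq clg_mono xi k | k <- enum (clg_expo l m) & clg_mono xi k \in V]>>%VS.
Proof.
(* With l = n.+2, 'Z_l is literally 'I_l. *)
case: l hl hchar hxi V hV => [|[|n]] // _ _ hxi V hV.
apply/eqP; rewrite eqEsubv; apply/andP; split; last first.
  by apply/span_subvP => u /mapP[k]; rewrite mem_filter => /andP[kV _] ->.
apply/subvP => v vV; rewrite (clg_expansion v); apply: memv_suml => a _.
have [->|va_neq0] := eqVneq (v a) 0; first by rewrite scale0r mem0v.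
apply/memvZ/memv_span/mapP; exists a; last by rewrite clg_mono_basis.
by rewrite mem_filter mem_enum clg_mono_basis andbT (clg_basis_mem_invariant hxi hV vV).
Qed.
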